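(* Let $X=\{x_0,\ldots,x_m\}$ and $\tilde X=\{\tilde x_1,\ldots,\tilde x_q\}$ (commuting). The multiplicative static feedback product $c\,\bar{@}\,d:=c\,\tilde\circ\,\delta_{(d^{-1}\circ c)^{\circ-1}}$ (with $d^{-1}\circ c$ the Wiener-Fliess composition product) is a right group action of the Abelian group $(\mathbb{R}^m_{pi}[[\tilde X]],\cdot,\mathbb 1)$ on the set of proper series in $\mathbb{R}^q\langle\langle X\rangle\rangle$; that is, for all proper $c\in\mathbb{R}^q\langle\langle X\rangle\rangle$ and all purely improper $d_1,d_2\in\mathbb{R}^m[[\tilde X]]$, $c\,\bar{@}\,\mathbb 1=c$ and $(c\,\bar{@}\,d_1)\,\bar{@}\,d_2=c\,\bar{@}\,(d_1\cdot d_2)$.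
   Context: Series conventions: $\mathbb{R}^\ell\langle\langle X\rangle\rangle$ noncommutative formal power series with coefficients in $\mathbb{R}^\ell$, $\mathbb{R}^m[[\tilde X]]$ commutative formal power series with coefficients in $\mathbb{R}^m$; componentwise products; proper = zero constant term; purely improper = each component has nonzero constant term; $\mathbb{R}^m_{pi}[[\tilde X]]$ the purely improper commutative series; $\cdot$ the Cauchy product $(d\cdot d',\eta)=\sum_{\zeta\nu=\eta}(d,\zeta)(d',\nu)$; $d^{-1}$ the Cauchy inverse; $\mathbb 1=[1\cdots1]^t$. Shuffle product $\sqcup\!\sqcup$: bilinear, $(x_i\eta)\sqcup\!\sqcup(x_j\xi)=x_i(\eta\sqcup\!\sqcup x_j\xi)+x_j(x_i\eta\sqcup\!\sqcup\xi)$, $\eta\sqcup\!\sqcup\emptyset=\emptyset\sqcup\!\sqcup\eta=\eta$; $g^{\sqcup\!\sqcup-1}$ componentwise shuffle inverse. Wiener-Fliess composition for proper $c$: $d\circ c=\sum_{\tilde\eta}(d,\tilde\eta)c^{\sqcup\!\sqcup\tilde\eta}$, $c^{\sqcup\!\sqcup\emptyset}=1$, $c^{\sqcup\!\sqcup\tilde x_i\tilde\eta}=c_i\sqcup\!\sqcup c^{\sqcup\!\sqcup\tilde\eta}$. Multiplicative mixed composition: $c\,\tilde\circ\,\delta_g=\sum_\eta(c,\eta)\bar\phi_g(\eta)(\mathbf 1)$, $\mathbf 1=1\emptyset$, $\bar\phi_g(x_0)(w)=x_0w$, $\bar\phi_g(x_i)(w)=x_i(g_i\sqcup\!\sqcup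 w)$ ($i\ge1$), extended multiplicatively (concatenation to composition). For purely improper $g\in\mathbb{R}^m\langle\langle X\rangle\rangle$, $g^{\circ-1}$ is the unique $h\in\mathbb{R}^m\langle\langle X\rangle\rangle$ with $h=g^{\sqcup\!\sqcup-1}\,\tilde\circ\,\delta_h$. *)

From HB Require Import structures.
From mathcomp Require Import all_boot all_order all_algebra.
From mathcomp Require Import reals.
From Stdlib Require Import ClassicalEpsilon.

Set Implicit Arguments.
Unset Strict Implicit.
Unset Printing Implicit Defensive.
Import Order.TTheory GRing.Theory Num.Theory.
Local Open Scope ring_scope.

Section Series.
Variable R : realType.

(* Alphabet X = {x_0,...,x_m} is 'I_m.+1; a word is a seq of letters. *)
Definition word (m : nat) := seq 'I_m.+1.
Definition sser (m : nat) := word m -> R.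
Definition nser (m l : nat) := word m -> 'I_l -> R.
(* Commutative words over X~ = {x~_1..x~_q}: exponent vectors. *)
Definition cmono (q : nat) := {ffun 'I_q -> nat}.
Definition cser (q l : nat) := cmono q -> 'I_l -> R.

Definition cmono0 (q : nat) : cmono q := [ffun => 0%N].

Definition comp (m l : nat) (c : nser m l) (j : 'I_l) : sser m := fun w => c w j.

Definition sone (m : nat) : sser m := fun w => if w is [::] then 1 else 0.

Section Defs.
Variables m q l : nat.



Definition lder (x : 'I_m.+1) (c : sser m) : sser m := fun u => c (x :: u).

Fixpoint shuffle (c d : sser m) (w : word m) {struct w} : R :=
  match w with
  | [::] => c [::] * d [::]
  | x :: w' => shuffle (lder x c) d w' + shuffle c (lder x d) w'
  end.

Definition nproper (c : nser m l) : Prop := forall i, c [::] i = 0.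

Definition cpimproper (d : cser q l) : Prop := forall i, d (cmono0 q) i != 0.

Definition cprod (d d' : cser q l) : cser q l := fun eta i =>
  \sum_(z : {ffun 'I_q -> 'I_(\sum_(j < q) eta j).+1} | [forall j, (z j <= eta j)%N])
     d [ffun j => nat_of_ord (z j)] i * d' [ffun j => (eta j - z j)%N] i.

Definition cone : cser q l := fun eta _ => if eta == cmono0 q then 1 else 0.

Definition cinv (d : cser q l) : cser q l :=
  epsilon (inhabits (fun _ _ => 0)) (fun h => cprod d h = cone).

Definition shpow (c : nser m q) (eta : cmono q) : sser m :=
  foldr (fun j acc => iter (eta j) (shuffle (comp c j)) acc) (@sone m) (enum 'I_q).

(* Wiener-Fliess composition d∘c = Σ_η~ (d,η~) c^{⧢η~}, for proper c.
   Only η~ with |η~| <= |w| contribute to the coefficient of w (c proper). *)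
Definition wfcomp (d : cser q l) (c : nser m q) : nser m l := fun w i =>
  \sum_(z : {ffun 'I_q -> 'I_(size w).+1} | (\sum_(j < q) (z j : nat) <= size w)%N)
     d [ffun j => nat_of_ord (z j)] i * shpow c [ffun j => nat_of_ord (z j)] w.

End Defs.

Section Mixed.
Variables m l : nat.

(* phi_g(x_0)(v) = x_0 v ; phi_g(x_i)(v) = x_i (g_i ⧢ v), i >= 1
   (letter x_i, i >= 1, uses component i-1 of g : R^m). *)
Definition phil (g : nser m m) (x : 'I_m.+1) (v : sser m) : sser m := fun u =>
  match u with
  | [::] => 0
  | y :: u' => if y == x then
                 match unlift ord0 x with
                 | None => v u'
                 | Some j => shuffle (comp g j) v u'
                 end
               else 0
  end.

Fixpoint phi (g : nser m m) (eta : word m) : sser m -> sser m :=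
  match eta with
  | [::] => id
  | x :: e => fun v => phil g x (phi g e v)
  end.

(* c ~∘ δ_g = Σ_η (c,η) phi_g(η)(1); only |η| <= |w| contributes. *)
Definition mixed (c : nser m l) (g : nser m m) : nser m l := fun w i =>
  \sum_(n < (size w).+1) \sum_(t : n.-tuple 'I_m.+1) c (tval t) i * phi g (tval t) (@sone m) w.

End Mixed.

Section Inverses.
Variable m : nat.

Definition shinv (g : nser m m) : nser m m :=
  epsilon (inhabits (fun _ _ => 0))
    (fun h => forall j, shuffle (comp g j) (comp h j) = @sone m).

(* g^{∘-1}: the unique h with h = g^{⧢-1} ~∘ δ_h *)
Definition compinv (g : nser m m) : nser m m :=
  epsilon (inhabits (fun _ _ => 0)) (fun h => h = mixed (shinv g) h).

End Inverses.

Definition feedback (m q : nat) (c : nser m q) (d : cser q m) : nser m q :=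
  mixed c (compinv (wfcomp (cinv d) c)).

End Series.

(* For a series g, let Psi_g be the map c |-> c ~o delta_g on R<<X>>.  Psi_g is
   a unital shuffle-algebra endomorphism, these maps compose as
   Psi_h2 o Psi_h1 = Psi_(h1 * h2) with (h1 * h2)_j = Psi_h2 (h1_j) ⧢ h2_j, and
   g^{o-1} is the unique h with Psi_h (g_j) ⧢ h_j = 1 for all j.  On the other
   side d |-> d o c maps Cauchy products to shuffle products, the unit to 1, and
   commutes with Psi_g.  Hence, with k1 = d1^-1 o c, h1 = k1^{o-1} and
   h2 = (d2^-1 o (c @ d1))^{o-1}, the series (d1 d2)^-1 o c = k1 ⧢ (d2^-1 o c)
   has composition inverse h1 * h2, and
   (c @ d1) @ d2 = Psi_h2 (Psi_h1 c) = Psi_(h1 * h2) c = c @ (d1 d2).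
   All inverses exist because their defining equations are recursions on the
   length of words, resp. the degree of monomials. *)

From Pilot Require Import Defs.
From HB Require Import structures.
From mathcomp Require Import all_boot all_order all_algebra.
From mathcomp Require Import reals ring.
From Stdlib Require Import ClassicalEpsilon FunctionalExtensionality.

Set Implicit Arguments.
Unset Strict Implicit.
Unset Printing Implicit Defensive.
Import Order.TTheory GRing.Theory Num.Theory.
Local Open Scope ring_scope.

Section SizeFix.
Variables (D A : Type) (size_of : D -> nat) (T : (D -> A) -> D -> A).
Hypothesis T_contractive : forall n (f f' : D -> A),
  (forall d, (size_of d < n)%N -> f d = f' d) ->
  forall d, (size_of d <= n)%N -> T f d = T f' d.

Definition size_fix (f0 : D -> A) : D -> A := fun d => iter (size_of d).+1 T f0 d.

Lemma iter_stable f0 k j d : (size_of d < k)%N -> iter k T f0 d = iter (k + j) T f0 d.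
Proof.
elim: k d => [//|k IHk] d lt_d_k.
by rewrite addSn /=; apply: (T_contractive (n := k)) => // e lt_e_k; apply: IHk.
Qed.

Lemma size_fixE f0 : T (size_fix f0) = size_fix f0.
Proof.
apply: functional_extensionality => d; rewrite /size_fix /=.
apply: (T_contractive (n := size_of d)) => // e lt_e_d.
have := iter_stable f0 (size_of d - (size_of e).+1) (ltnSn (size_of e)).
by rewrite subnKC.
Qed.

Lemma size_fix_unique f f' : T f = f -> T f' = f' -> f = f'.
Proof.
move=> Tf Tf'.
suff eq_below n d : (size_of d < n)%N -> f d = f' d.
  by apply: functional_extensionality => d; apply: (eq_below (size_of d).+1).
elim: n d => [//|n IHn] d lt_d_n.
by rewrite -Tf -Tf'; apply: (T_contractive (n := n)).
Qed.

End SizeFix.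

Lemma seq_size_ind (T : Type) (P : seq T -> Prop) : P [::] ->
  (forall x w, (forall u, (size u <= size w)%N -> P u) -> P (x :: w)) -> forall w, P w.
Proof.
move=> P0 PS; suff P_upto n w : (size w <= n)%N -> P w by move=> w; apply: (P_upto (size w)).
elim: n w => [|n IHn] [|x w] //= le_w.
by apply: PS => u le_u; apply: IHn; apply: leq_trans le_u le_w.
Qed.

Section Shuffle.
Variables (R : realType) (m : nat).
Local Notation ser := (sser R m).
Local Notation "a ⧢ b" := (@shuffle R m a b) (at level 40, left associativity).
Local Notation sone := (@sone R m).

Definition sadd (f g : ser) : ser := fun w => f w + g w.
Definition sscale (k : R) (f : ser) : ser := fun w => k * f w.
Definition szero : ser := fun _ => 0.

Lemma lder_sone x : lder x sone = szero.
Proof. by []. Qed.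

Lemma lderD x (f g : ser) : lder x (sadd f g) = sadd (lder x f) (lder x g).
Proof. by []. Qed.

Lemma lderZ x k (f : ser) : lder x (sscale k f) = sscale k (lder x f).
Proof. by []. Qed.

Lemma shuffle_nil (a b : ser) : (a ⧢ b) [::] = a [::] * b [::].
Proof. by []. Qed.

Lemma shuffle_cons (a b : ser) x w :
  (a ⧢ b) (x :: w) = (lder x a ⧢ b) w + (a ⧢ lder x b) w.
Proof. by []. Qed.

Lemma lder_shuffle x (a b : ser) : lder x (a ⧢ b) = sadd (lder x a ⧢ b) (a ⧢ lder x b).
Proof. by []. Qed.

Lemma shuffle_eq_upto n (a a' b b' : ser) :
  (forall u, (size u <= n)%N -> a u = a' u) -> (forall u, (size u <= n)%N -> b u = b' u) ->
  forall w, (size w <= n)%N -> (a ⧢ b) w = (a' ⧢ b') w.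
Proof.
elim: n a a' b b' => [|n IHn] a a' b b' eq_a eq_b [|x w] //= le_w; rewrite ?eq_a ?eq_b //.
rewrite (IHn (lder x a) (lder x a') b b') ?(IHn a a' (lder x b) (lder x b')) //.
- by move=> u le_u; apply: eq_a; apply: ltnW.
- by move=> u le_u; apply: eq_b.
- by move=> u le_u; apply: eq_a.
- by move=> u le_u; apply: eq_b; apply: ltnW.
Qed.

Lemma shuffleC (a b : ser) : a ⧢ b = b ⧢ a.
Proof.
apply: functional_extensionality => w.
elim: w a b => [|x w IHw] a b /=; first by rewrite mulrC.
by rewrite addrC [shuffle a _ w]IHw [shuffle (lder x a) _ w]IHw.
Qed.

Lemma shuffleDl (a a' b : ser) : sadd a a' ⧢ b = sadd (a ⧢ b) (a' ⧢ b).
Proof.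
apply: functional_extensionality => w.
elim: w a a' b => [|x w IHw] a a' b /=; first by rewrite /sadd mulrDl.
by rewrite lderD !IHw /sadd addrACA.
Qed.

Lemma shuffleDr (a b b' : ser) : a ⧢ sadd b b' = sadd (a ⧢ b) (a ⧢ b').
Proof. by rewrite shuffleC shuffleDl (shuffleC b) (shuffleC b'). Qed.

Lemma shuffleZl k (a b : ser) : sscale k a ⧢ b = sscale k (a ⧢ b).
Proof.
apply: functional_extensionality => w.
elim: w a b => [|x w IHw] a b /=; first by rewrite /sscale mulrA.
by rewrite lderZ !IHw /sscale mulrDr.
Qed.

Lemma shuffleZr k (a b : ser) : a ⧢ sscale k b = sscale k (a ⧢ b).
Proof. by rewrite shuffleC shuffleZl shuffleC. Qed.

Lemma shuffle0l (b : ser) : szero ⧢ b = szero.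
Proof.
apply: functional_extensionality => w.
by elim: w b => [|x w IHw] b /=; rewrite ?mul0r // !IHw addr0.
Qed.

Lemma shuffle0r (b : ser) : b ⧢ szero = szero.
Proof. by rewrite shuffleC shuffle0l. Qed.

Lemma shuffle1l (b : ser) : sone ⧢ b = b.
Proof.
apply: functional_extensionality => w.
elim: w b => [|x w IHw] b; first by rewrite shuffle_nil mul1r.
by rewrite shuffle_cons lder_sone shuffle0l IHw add0r.
Qed.

Lemma shuffle1r (b : ser) : b ⧢ sone = b.
Proof. by rewrite shuffleC shuffle1l. Qed.

Lemma shuffleA (a b c : ser) : a ⧢ (b ⧢ c) = a ⧢ b ⧢ c.
Proof.
apply: functional_extensionality => w.
elim: w a b c => [|x w IHw] a b c /=; first by rewrite mulrA.
by rewrite !lder_shuffle shuffleDl shuffleDr /sadd !IHw addrA.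
Qed.

Lemma shuffleACA (a b c d : ser) : a ⧢ b ⧢ (c ⧢ d) = a ⧢ c ⧢ (b ⧢ d).
Proof. by rewrite !shuffleA -(shuffleA a b) (shuffleC b c) shuffleA. Qed.

Lemma shuffle_suml (I : Type) (r : seq I) (P : pred I) (F : I -> ser) (b : ser) w :
  ((fun u => \sum_(i <- r | P i) F i u) ⧢ b) w = \sum_(i <- r | P i) (F i ⧢ b) w.
Proof.
elim: r => [|i r IHr].
  have -> : (fun u => \sum_(i <- [::] | P i) F i u) = szero.
    by apply: functional_extensionality => u; rewrite big_nil.
  by rewrite shuffle0l big_nil.
rewrite big_cons; case: ifP => Pi; last first.
  by rewrite -IHr; congr shuffle; apply: functional_extensionality => u; rewrite big_cons Pi.
have -> : (fun u => \sum_(j <- i :: r | P j) F j u) =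
          sadd (F i) (fun u => \sum_(j <- r | P j) F j u).
  by apply: functional_extensionality => u; rewrite big_cons Pi.
by rewrite shuffleDl /sadd IHr.
Qed.

Lemma shuffle_sumr (I : Type) (r : seq I) (P : pred I) (F : I -> ser) (b : ser) w :
  (b ⧢ (fun u => \sum_(i <- r | P i) F i u)) w = \sum_(i <- r | P i) (b ⧢ F i) w.
Proof. by rewrite shuffleC shuffle_suml; apply: eq_bigr => i _; rewrite shuffleC. Qed.

End Shuffle.

Arguments szero {R m}.

Section ShuffleInverse.
Variables (R : realType) (m : nat).
Local Notation ser := (sser R m).
Local Notation "a ⧢ b" := (@shuffle R m a b) (at level 40, left associativity).
Local Notation sone := (@sone R m).

Definition vanishes_below n (f : ser) := forall u, (size u < n)%N -> f u = 0.

Lemma vanishes_below_lder n x (f : ser) :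
  vanishes_below n f -> vanishes_below n.-1 (lder x f).
Proof. by move=> f0 u lt_u; apply: f0; case: n lt_u. Qed.

Lemma vanishes_below_shuffle i j (a b : ser) :
  vanishes_below i a -> vanishes_below j b -> vanishes_below (i + j) (a ⧢ b).
Proof.
move=> a0 b0 u; elim: u i j a b a0 b0 => [|x u IHu] i j a b a0 b0 /= lt_u.
  by case: i a0 lt_u => [|i] a0 lt_u; [rewrite b0 ?mulr0 | rewrite a0 ?mul0r].
rewrite (IHu i.-1 j) ?(IHu i j.-1) ?addr0 //; try exact: vanishes_below_lder.
- by case: j b0 lt_u => [|j] b0; rewrite ?addn0 ?addnS //; apply: ltn_trans.
- by case: i a0 lt_u => [|i] a0 //=; apply: ltn_trans.
Qed.

Lemma shuffle_eq_upto_proper n (a f f' : ser) : a [::] = 0 ->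
  (forall u, (size u < n)%N -> f u = f' u) ->
  forall w, (size w <= n)%N -> (a ⧢ f) w = (a ⧢ f') w.
Proof.
move=> a0; elim: n f f' => [|n IHn] f f' eq_f [|x w] //= le_w; rewrite ?a0 ?mul0r //.
congr (_ + _); last by apply: IHn => // u lt_u; apply: eq_f.
by apply: (shuffle_eq_upto (n := n)) => // u le_u; apply: eq_f.
Qed.

Definition proper_part (a : ser) : ser := fun u => a u - a [::] * sone u.

(* Writing a = a(∅) 1 + proper_part a, the equation a ⧢ b = 1 reads
   b = a(∅)^-1 (1 - proper_part a ⧢ b), a recursion on the length of words. *)
Definition shuffle_inv_step (a f : ser) : ser :=
  fun w => (a [::])^-1 * (sone w - (proper_part a ⧢ f) w).

Definition shuffle_inv (a : ser) : ser := size_fix size (shuffle_inv_step a) (fun _ => 0).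

Lemma shuffle_inv_step_contractive (a : ser) n (f f' : ser) :
  (forall u, (size u < n)%N -> f u = f' u) ->
  forall w, (size w <= n)%N -> shuffle_inv_step a f w = shuffle_inv_step a f' w.
Proof.
move=> eq_f w le_w; rewrite /shuffle_inv_step (shuffle_eq_upto_proper _ eq_f) //.
by rewrite /proper_part mulr1 subrr.
Qed.

Lemma shuffle_invP (a : ser) : a [::] != 0 -> a ⧢ shuffle_inv a = sone.
Proof.
move=> a0.
have fixE := size_fixE (@shuffle_inv_step_contractive a) (fun _ => 0).
have splitE : a = sadd (proper_part a) (sscale (a [::]) sone).
  by apply: functional_extensionality => u; rewrite /sadd /sscale /proper_part subrK.
rewrite {1}splitE shuffleDl shuffleZl shuffle1l; apply: functional_extensionality => w.
have := congr1 (fun f => f w) fixE; rewrite /= -/(shuffle_inv a) /shuffle_inv_step.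
by rewrite /sadd /sscale => <-; rewrite mulrA mulfV // mul1r addrC subrK.
Qed.

Lemma shuffle_inv_unique (a b b' : ser) : a ⧢ b = sone -> a ⧢ b' = sone -> b = b'.
Proof. by move=> ab ab'; rewrite -[b]shuffle1r -ab' shuffleA (shuffleC b) ab shuffle1l. Qed.

End ShuffleInverse.

Section TupleSums.
Variables (V : nmodType) (T : finType).

Lemma sum_tuple0 (F : 0.-tuple T -> V) : \sum_(t : 0.-tuple T) F t = F [tuple].
Proof. by rewrite (big_pred1 [tuple]) // => t; apply/esym/eqP; apply: tuple0. Qed.

Lemma sum_tupleS n (F : n.+1.-tuple T -> V) :
  \sum_(t : n.+1.-tuple T) F t = \sum_(x : T) \sum_(t : n.-tuple T) F [tuple of x :: t].
Proof.
rewrite pair_big /= (reindex (fun p : T * n.-tuple T => [tuple of p.1 :: p.2])) //.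
exists (fun t : n.+1.-tuple T => (thead t, [tuple of behead t])).
- by case=> x t _ /=; congr pair; apply: val_inj.
- by move=> t _ /=; rewrite -tuple_eta.
Qed.

End TupleSums.

Section MixedComposition.
Variables (R : realType) (m : nat).
Local Notation ser := (sser R m).
Local Notation "a ⧢ b" := (@shuffle R m a b) (at level 40, left associativity).
Local Notation sone := (@sone R m).
Local Notation nsr := (nser R m m).

(* phi_g(x)(v) = x (gcoef g x ⧢ v): gcoef g x_0 = 1 and gcoef g x_i = g_i. *)
Definition gcoef (g : nsr) (x : 'I_m.+1) : ser :=
  if unlift ord0 x is Some j then Defs.comp g j else sone.

Definition smixed (g : nsr) (c : ser) : ser := fun w =>
  \sum_(n < (size w).+1) \sum_(t : n.-tuple 'I_m.+1) c (tval t) * phi g (tval t) sone w.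

Lemma comp_mixed l (c : nser R m l) g i :
  Defs.comp (mixed c g) i = smixed g (Defs.comp c i).
Proof. by []. Qed.

Lemma phi_cons g y t (v : ser) x u :
  phi g (y :: t) v (x :: u) = if x == y then (gcoef g y ⧢ phi g t v) u else 0.
Proof.
rewrite /= /gcoef; case: (x == y) => //.
by case: (unlift ord0 y) => [j|] //; rewrite shuffle1l.
Qed.

Lemma phi_vanishes_below g (t : word m) (v : ser) : vanishes_below (size t) (phi g t v).
Proof.
elim: t => [|y t IHt] [|x u] // lt_u.
rewrite phi_cons; case: (x == y) => //.
have gcoef_vb : vanishes_below 0 (gcoef g y) by [].
by apply: (vanishes_below_shuffle gcoef_vb IHt); rewrite add0n.
Qed.

Lemma smixed_nil g c : smixed g c [::] = c [::].
Proof. by rewrite /smixed big_ord1 sum_tuple0 /= mulr1. Qed.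

Lemma smixed_widen g c N u : (size u <= N)%N ->
  smixed g c u = \sum_(n < N.+1) \sum_(t : n.-tuple 'I_m.+1) c (tval t) * phi g (tval t) sone u.
Proof.
move=> le_u_N; rewrite /smixed.
rewrite (big_ord_widen N.+1
  (fun n => \sum_(t : n.-tuple 'I_m.+1) c (tval t) * phi g (tval t) sone u)) //.
rewrite [RHS](bigID (fun n : 'I_N.+1 => (n < (size u).+1)%N)) /=.
rewrite [X in _ = _ + X]big1 ?addr0 // => n; rewrite -leqNgt => le_u_n.
by apply: big1 => t _; rewrite phi_vanishes_below ?mulr0 // size_tuple.
Qed.

Lemma smixed_eq_upto g n (c c' : ser) : (forall u, (size u <= n)%N -> c u = c' u) ->
  forall w, (size w <= n)%N -> smixed g c w = smixed g c' w.
Proof.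
move=> eq_c w le_w; apply: eq_bigr => k _; apply: eq_bigr => t _.
by rewrite eq_c // size_tuple; apply: leq_trans le_w; rewrite -ltnS.
Qed.

Lemma smixedD g (a b : ser) : smixed g (sadd a b) = sadd (smixed g a) (smixed g b).
Proof.
apply: functional_extensionality => w; rewrite /smixed /sadd -big_split.
by apply: eq_bigr => n _; rewrite -big_split; apply: eq_bigr => t _; rewrite mulrDl.
Qed.

Lemma smixedZ g k (a : ser) w : smixed g (sscale k a) w = k * smixed g a w.
Proof.
rewrite /smixed /sscale mulr_sumr; apply: eq_bigr => n _.
by rewrite mulr_sumr; apply: eq_bigr => t _; rewrite mulrA.
Qed.

Lemma smixed0 g : smixed g szero = szero.
Proof.
apply: functional_extensionality => w; apply: big1 => n _.
by apply: big1 => t _; rewrite mul0r.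
Qed.

Lemma smixed_sum g (I : Type) (r : seq I) (P : pred I) (F : I -> ser) w :
  smixed g (fun u => \sum_(i <- r | P i) F i u) w = \sum_(i <- r | P i) smixed g (F i) w.
Proof.
rewrite /smixed -exchange_big; apply: eq_bigr => n _.
by rewrite -exchange_big; apply: eq_bigr => t _; rewrite mulr_suml.
Qed.

Lemma nproper_mixed l (c : nser R m l) g : nproper c -> nproper (mixed c g).
Proof.
move=> c0 j; rewrite -[mixed c g [::] j]/(smixed g (Defs.comp c j) [::]) smixed_nil.
exact: c0.
Qed.

Lemma lder_smixed g c x : lder x (smixed g c) = gcoef g x ⧢ smixed g (lder x c).
Proof.
apply: functional_extensionality => w.
rewrite /lder {1}/smixed /= big_ord_recl sum_tuple0 /= mulr0 add0r.
have tail_sum (n : 'I_(size w).+1) :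
    \sum_(t : n.+1.-tuple 'I_m.+1) c (tval t) * phi g (tval t) sone (x :: w) =
    \sum_(t : n.-tuple 'I_m.+1) c (x :: tval t) * (gcoef g x ⧢ phi g (tval t) sone) w.
  rewrite sum_tupleS (bigD1 x) // [X in _ + X = _]big1 ?addr0 => [|y ne_yx].
    by apply: eq_bigr => t _; rewrite phi_cons eqxx.
  by apply: big1 => t _; rewrite phi_cons (ifN_eqC _ _ ne_yx) mulr0.
rewrite (eq_bigr _ (fun n _ => tail_sum n)).
rewrite (shuffle_eq_upto (n := size w) (a' := gcoef g x) (b' := fun u =>
    \sum_(n < (size w).+1) \sum_(t : n.-tuple 'I_m.+1)
      c (x :: tval t) * phi g (tval t) sone u)) //;
  last by move=> u le_u; rewrite (smixed_widen _ _ le_u).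
rewrite shuffle_sumr; apply: eq_bigr => n _.
rewrite shuffle_sumr; apply: eq_bigr => t _.
by rewrite (shuffleZr (c (x :: tval t)) (gcoef g x) (phi g (tval t) sone)).
Qed.

Lemma smixed_cons g c x w : smixed g c (x :: w) = (gcoef g x ⧢ smixed g (lder x c)) w.
Proof. by rewrite -lder_smixed. Qed.

Lemma gcoef_eq_upto n (g g' : nsr) x : (forall u, (size u < n)%N -> g u = g' u) ->
  forall u, (size u < n)%N -> gcoef g x u = gcoef g' x u.
Proof.
by move=> eq_g u lt_u; rewrite /gcoef; case: (unlift ord0 x) => // j; rewrite /Defs.comp eq_g.
Qed.

Lemma smixed_eq_upto_coef n (g g' : nsr) : (forall u, (size u < n)%N -> g u = g' u) ->
  forall c w, (size w <= n)%N -> smixed g c w = smixed g' c w.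
Proof.
elim: n => [|n IHn] eq_g c [|x w] le_w; rewrite ?smixed_nil // !smixed_cons.
have eq_g_n u : (size u < n)%N -> g u = g' u by move=> lt_u; apply: eq_g; apply: ltnW.
apply: (shuffle_eq_upto (n := size w)) => // u le_u.
  by apply: (gcoef_eq_upto x eq_g); apply: leq_ltn_trans le_u _.
by apply: (IHn eq_g_n); apply: leq_trans le_u le_w.
Qed.

Definition nsone : nsr := fun w _ => sone w.

Lemma gcoef_nsone x : gcoef nsone x = sone.
Proof. by rewrite /gcoef; case: (unlift ord0 x). Qed.

Lemma smixed_nsone c : smixed nsone c = c.
Proof.
apply: functional_extensionality => w; elim: w c => [|x w IHw] c; first exact: smixed_nil.
by rewrite smixed_cons gcoef_nsone shuffle1l IHw.
Qed.

Lemma smixed_sone g : smixed g sone = sone.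
Proof.
apply: functional_extensionality => -[|x w]; first exact: smixed_nil.
by rewrite smixed_cons lder_sone smixed0 shuffle0r.
Qed.

Lemma smixed_shuffle g (a b : ser) : smixed g (a ⧢ b) = smixed g a ⧢ smixed g b.
Proof.
apply: functional_extensionality => w; elim/seq_size_ind: w a b => [|x w IHw] a b.
  by rewrite smixed_nil !shuffle_nil !smixed_nil.
rewrite smixed_cons lder_shuffle smixedD shuffleDr shuffle_cons !lder_smixed /sadd.
congr (_ + _); last rewrite shuffleA (shuffleC (smixed g a)); rewrite -shuffleA;
  by apply: (shuffle_eq_upto (n := size w)) => // u le_u; apply: IHw.
Qed.

Definition mixed_star (h1 h2 : nsr) : nsr :=
  fun w j => (smixed h2 (Defs.comp h1 j) ⧢ Defs.comp h2 j) w.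

Lemma gcoef_star h1 h2 x : gcoef (mixed_star h1 h2) x = smixed h2 (gcoef h1 x) ⧢ gcoef h2 x.
Proof. by rewrite /gcoef; case: (unlift ord0 x) => [j|] //; rewrite smixed_sone shuffle1l. Qed.

Lemma smixed_comp h1 h2 c : smixed h2 (smixed h1 c) = smixed (mixed_star h1 h2) c.
Proof.
apply: functional_extensionality => w; elim/seq_size_ind: w c => [|x w IHw] c.
  by rewrite !smixed_nil.
rewrite !smixed_cons lder_smixed smixed_shuffle gcoef_star.
rewrite shuffleA (shuffleC (gcoef h2 x)).
by apply: (shuffle_eq_upto (n := size w)) => // u le_u; apply: IHw.
Qed.

End MixedComposition.

Section CompositionInverse.
Variables (R : realType) (m : nat).
Local Notation "a ⧢ b" := (@shuffle R m a b) (at level 40, left associativity).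
Local Notation sone := (@sone R m).
Local Notation nsr := (nser R m m).

Definition npimproper (g : nsr) : Prop := forall j, g [::] j != 0.

Lemma shinvP (g : nsr) : npimproper g ->
  forall j, Defs.comp g j ⧢ Defs.comp (shinv g) j = sone.
Proof.
move=> g0; apply: (epsilon_spec (inhabits (fun _ _ => 0))
  (fun h : nsr => forall j, Defs.comp g j ⧢ Defs.comp h j = sone)).
by exists (fun w j => shuffle_inv (Defs.comp g j) w) => j; exact: shuffle_invP (g0 j).
Qed.

Lemma mixed_eq_upto_coef (s : nsr) n (h h' : nsr) :
  (forall u, (size u < n)%N -> h u = h' u) ->
  forall w, (size w <= n)%N -> mixed s h w = mixed s h' w.
Proof.
move=> eq_h w le_w; apply: functional_extensionality => j.
exact: (smixed_eq_upto_coef eq_h (Defs.comp s j) le_w).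
Qed.

Lemma compinv_fix (g : nsr) : compinv g = mixed (shinv g) (compinv g).
Proof.
apply: (epsilon_spec (inhabits (fun _ _ => 0)) (fun h : nsr => h = mixed (shinv g) h)).
exists (size_fix size (mixed (shinv g)) (fun _ _ => 0)).
by rewrite size_fixE //; apply: mixed_eq_upto_coef.
Qed.

Lemma compinvP (g : nsr) : npimproper g ->
  forall j, smixed (compinv g) (Defs.comp g j) ⧢ Defs.comp (compinv g) j = sone.
Proof.
move=> g0 j; rewrite {2}compinv_fix comp_mixed -smixed_shuffle.
by rewrite shinvP // smixed_sone.
Qed.

(* Since smixed h is a unital shuffle morphism, h = mixed (shinv g) h holds
   exactly when smixed h (g_j) ⧢ h_j = 1 for all j. *)
Lemma compinv_unique (g h : nsr) : npimproper g ->
  (forall j, smixed h (Defs.comp g j) ⧢ Defs.comp h j = sone) -> compinv g = h.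
Proof.
move=> g0 hP; apply: (size_fix_unique (T := mixed (shinv g))).
- exact: mixed_eq_upto_coef.
- exact/esym/compinv_fix.
apply: functional_extensionality => w; apply: functional_extensionality => j.
have hE : Defs.comp h j = smixed h (Defs.comp (shinv g) j).
  apply: (shuffle_inv_unique (hP j)).
  by rewrite -smixed_shuffle shinvP // smixed_sone.
by rewrite -[RHS]/(Defs.comp h j w) hE.
Qed.

End CompositionInverse.

Section CauchyProduct.
Variables (R : realType) (q : nat).
Local Notation mon := (cmono q).
Local Notation box N := {ffun 'I_q -> 'I_N.+1}.

Definition mono K (z : {ffun 'I_q -> 'I_K}) : mon := [ffun j => nat_of_ord (z j)].
Definition madd (e f : mon) : mon := [ffun j => (e j + f j)%N].
Definition msub (e f : mon) : mon := [ffun j => (e j - f j)%N].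
Definition deg (e : mon) : nat := (\sum_(j < q) e j)%N.

Lemma coef_le_deg (e : mon) j : (e j <= deg e)%N.
Proof. by rewrite /deg (bigD1 j) //= leq_addr. Qed.

Lemma deg_mono K (z : {ffun 'I_q -> 'I_K}) : deg (mono z) = (\sum_(j < q) (z j : nat))%N.
Proof. by apply: eq_bigr => j _; rewrite ffunE. Qed.

Lemma mono_eq0 K (z : box K) : (mono z == cmono0 q) = (z == [ffun => ord0]).
Proof.
apply/eqP/eqP => [z0|->]; last by apply/ffunP => j; rewrite !ffunE.
by apply/ffunP => j; apply: val_inj; have := congr1 (fun f : mon => f j) z0; rewrite !ffunE.
Qed.

Lemma mono_ord0 K : mono ([ffun => ord0] : box K) = cmono0 q.
Proof. by apply/ffunP => j; rewrite !ffunE. Qed.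

Lemma deg_msub_lt (e f : mon) : (forall j, f j <= e j)%N -> f != cmono0 q ->
  (deg (msub e f) < deg e)%N.
Proof.
move=> le_fe f_neq0.
have degB : (deg (msub e f) + deg f)%N = deg e.
  by rewrite /deg -big_split /=; apply: eq_bigr => j _; rewrite ffunE subnK.
suff : (0 < deg f)%N by rewrite -degB -{1}[deg (msub e f)]addn0 ltn_add2l.
rewrite lt0n; apply: contra f_neq0; rewrite /deg sum_nat_eq0 => /forallP f0.
by apply/eqP/ffunP => j; rewrite ffunE; apply/eqP; apply: f0.
Qed.

Lemma sum_box_widen K1 K2 (P : pred mon) (F : mon -> R) : (K1 <= K2)%N ->
  (forall e, P e -> forall j, (e j <= K1)%N) ->
  \sum_(z : box K2 | P (mono z)) F (mono z) =
  \sum_(z : box K1 | P (mono z)) F (mono z).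
Proof.
move=> le_K12 P_box; have le_K12S : (K1.+1 <= K2.+1)%N by [].
pose widen (z : box K1) : box K2 :=
  [ffun j => widen_ord le_K12S (z j)].
pose narrow (z : box K2) : box K1 :=
  [ffun j => inord (z j)].
have mono_widen z : mono (widen z) = mono z by apply/ffunP => j; rewrite !ffunE.
rewrite (reindex_onto widen narrow) /=; last first.
  move=> z Pz; apply/ffunP => j; apply: val_inj; rewrite !ffunE /= inordK //.
  by rewrite ltnS; have := P_box _ Pz j; rewrite ffunE.
apply: eq_big => z; last by rewrite mono_widen.
rewrite mono_widen; case: (P (mono z)) => //=; apply/eqP/ffunP => j.
by apply: val_inj; rewrite !ffunE /= inordK // ltn_ord.
Qed.

Lemma sum_box_eq K1 K2 (P : pred mon) (F : mon -> R) :
  (forall e, P e -> forall j, (e j <= minn K1 K2)%N) ->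
  \sum_(z : box K1 | P (mono z)) F (mono z) =
  \sum_(z : box K2 | P (mono z)) F (mono z).
Proof.
move=> P_box; case: (leqP K1 K2) => [le_K12 | /ltnW le_K21].
  by rewrite (sum_box_widen F le_K12) // => e Pe j; rewrite -(minn_idPl le_K12); apply: P_box.
by rewrite (sum_box_widen F le_K21) // => e Pe j; rewrite -(minn_idPr le_K21); apply: P_box.
Qed.

Section Coefficients.
Variable l : nat.
Local Notation cs := (cser R q l).
Local Notation cone := (@cone R q l).

Lemma cprod_single (d f : cs) eta i :
  (forall z : box (deg eta), [forall j, (z j <= eta j)%N] ->
     z != [ffun => ord0] -> d (mono z) i * f (msub eta (mono z)) i = 0) ->
  cprod d f eta i = d (cmono0 q) i * f eta i.
Proof.
move=> others0; rewrite /cprod (bigD1 [ffun => ord0]) /=; last first.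
  by apply/forallP => j; rewrite ffunE.
rewrite [X in _ + X]big1 ?addr0 => [|z /andP[z_le z_neq0]].
  by congr (d _ i * f _ i); apply/ffunP => j; rewrite !ffunE ?subn0.
rewrite -[RHS](others0 z z_le z_neq0); congr (_ * f _ i).
by apply/ffunP => j; rewrite !ffunE.
Qed.

Lemma cprodBr (d f f' : cs) eta i :
  cprod d f eta i - cprod d f' eta i = cprod d (fun e k => f e k - f' e k) eta i.
Proof. by rewrite /cprod -sumrB; apply: eq_bigr => z _; rewrite mulrBr. Qed.

(* The coefficient of eta in d * f is d(0) f(eta) plus terms involving f at
   monomials of lower degree, so this step is contractive for deg. *)
Definition cinv_step (d f : cs) : cs := fun eta i =>
  f eta i + (cone eta i - cprod d f eta i) / d (cmono0 q) i.

Lemma cinv_step_contractive (d : cs) : cpimproper d -> forall n (f f' : cs),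
  (forall e, (deg e < n)%N -> f e = f' e) ->
  forall e, (deg e <= n)%N -> cinv_step d f e = cinv_step d f' e.
Proof.
move=> d0 n f f' eq_f e le_e; apply: functional_extensionality => i.
have cprodB : cprod d f e i - cprod d f' e i = d (cmono0 q) i * (f e i - f' e i).
  rewrite cprodBr cprod_single // => z z_le z_neq0.
  have lt_deg : (deg (msub e (mono z)) < deg e)%N.
    by apply: deg_msub_lt; [move=> j; rewrite ffunE; apply: (forallP z_le) | rewrite mono_eq0].
  by rewrite eq_f ?subrr ?mulr0 //; apply: leq_trans lt_deg le_e.
rewrite /cinv_step -[f e i](subrK (f' e i)) -[cprod d f e i](subrK (cprod d f' e i)) cprodB.
by field; apply: d0.
Qed.

Lemma cinvP (d : cs) : cpimproper d -> cprod d (cinv d) = cone.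
Proof.
move=> d0; apply: (epsilon_spec (inhabits (fun _ _ => 0)) (fun h : cs => cprod d h = cone)).
have fixE := size_fixE (cinv_step_contractive d0) (fun _ _ => 0).
exists (size_fix deg (cinv_step d) (fun _ _ => 0)).
set h := size_fix _ _ _ in fixE *.
apply: functional_extensionality => e; apply: functional_extensionality => i.
have /eqP := congr1 (fun F => F e i) fixE; rewrite /cinv_step addrC -subr_eq0 addrK.
by rewrite mulf_eq0 invr_eq0 (negbTE (d0 i)) orbF subr_eq0 => /eqP ->.
Qed.

End Coefficients.
End CauchyProduct.

Section WienerFliess.
Variables (R : realType) (m q : nat).
Local Notation ser := (sser R m).
Local Notation "a ⧢ b" := (@shuffle R m a b) (at level 40, left associativity).
Local Notation sone := (@sone R m).
Local Notation mon := (cmono q).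
Local Notation cvec := (nser R m q).
Local Notation box N := {ffun 'I_q -> 'I_N.+1}.

Lemma iter_shufflel k (a b c : ser) : iter k (shuffle a) (b ⧢ c) = iter k (shuffle a) b ⧢ c.
Proof. by elim: k => //= k ->; rewrite shuffleA. Qed.

Lemma iter_shuffler k (a b c : ser) : iter k (shuffle a) (b ⧢ c) = b ⧢ iter k (shuffle a) c.
Proof. by rewrite shuffleC iter_shufflel shuffleC. Qed.

Lemma shpow_madd (c : cvec) (e f : mon) : shpow c (madd e f) = shpow c e ⧢ shpow c f.
Proof.
rewrite /shpow; elim: (enum 'I_q) => [|j s IHs] /=; first by rewrite shuffle1l.
by rewrite IHs ffunE iterD iter_shuffler iter_shufflel.
Qed.

Lemma shpow0 (c : cvec) : shpow c (cmono0 q) = sone.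
Proof. by rewrite /shpow; elim: (enum 'I_q) => //= j s ->; rewrite ffunE. Qed.

Lemma vanishes_below_iter_shuffle (a b : ser) k n :
  vanishes_below 1 a -> vanishes_below n b -> vanishes_below (k + n) (iter k (shuffle a) b).
Proof.
move=> a0 b0; elim: k => [|k IHk] //=.
by rewrite -[(k.+1 + n)%N]/(1 + (k + n))%N; apply: vanishes_below_shuffle.
Qed.

Lemma shpow_vanishes_below (c : cvec) (e : mon) :
  nproper c -> vanishes_below (deg e) (shpow c e).
Proof.
move=> c0; have -> : deg e = (\sum_(j <- enum 'I_q) e j)%N.
  by rewrite big_enum /=; apply: eq_bigl => j; rewrite inE.
rewrite /shpow; elim: (enum 'I_q) => [|j s IHs] /=; first by move=> u; rewrite big_nil.
by rewrite big_cons; apply: vanishes_below_iter_shuffle => // -[|//] _; apply: c0.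
Qed.

Lemma smixed_iter_shuffle (g : nser R m m) k (a b : ser) :
  smixed g (iter k (shuffle a) b) = iter k (shuffle (smixed g a)) (smixed g b).
Proof. by elim: k => //= k <-; rewrite smixed_shuffle. Qed.

Lemma smixed_shpow (g : nser R m m) (c : cvec) e : smixed g (shpow c e) = shpow (mixed c g) e.
Proof.
rewrite /shpow; elim: (enum 'I_q) => [|j s IHs] /=; first exact: smixed_sone.
by rewrite smixed_iter_shuffle IHs.
Qed.

Section Coefficients.
Variable l : nat.
Local Notation cs := (cser R q l).

(* For proper c only monomials of degree <= |u| contribute, so any box of
   side N >= |u| gives the coefficient of u. *)
Lemma wfcomp_box (d : cs) (c : cvec) i N u : nproper c -> (size u <= N)%N ->
  wfcomp d c u i = \sum_(z : box N) d (mono z) i * shpow c (mono z) u.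
Proof.
move=> c0 le_u_N; pose F e := d e i * shpow c e u.
rewrite [RHS](bigID (fun z => deg (mono z) <= size u)%N) /=.
rewrite [X in _ = _ + X]big1 ?addr0 => [|z]; last first.
  by rewrite -ltnNge => lt_u; rewrite shpow_vanishes_below ?mulr0.
rewrite -(sum_box_eq (K1 := size u) (P := fun e => deg e <= size u)%N F); last first.
  move=> e le_e j; rewrite (minn_idPl le_u_N); apply: leq_trans (coef_le_deg e j) le_e.
by apply: eq_bigl => z; rewrite deg_mono.
Qed.

Lemma wfcomp_nil (d : cs) (c : cvec) i : nproper c -> wfcomp d c [::] i = d (cmono0 q) i.
Proof.
move=> c0; rewrite (@wfcomp_box d c i 0) // (big_pred1 [ffun => ord0]) => [|z].
  by rewrite mono_ord0 shpow0 mulr1.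
by apply/esym/eqP/ffunP => j; rewrite ffunE; apply: ord1.
Qed.

Lemma wfcomp_cone (c : cvec) : nproper c -> wfcomp (@cone R q l) c = fun w _ => sone w.
Proof.
move=> c0; apply: functional_extensionality => u; apply: functional_extensionality => i.
rewrite (@wfcomp_box _ c i (size u)) // (bigD1 [ffun => ord0]) //= big1 ?addr0 => [|z z_neq0].
  by rewrite mono_ord0 /cone eqxx mul1r shpow0.
by rewrite /cone mono_eq0 (negbTE z_neq0) mul0r.
Qed.

Lemma smixed_wfcomp (g : nser R m m) (d : cs) (c : cvec) i : nproper c ->
  smixed g (Defs.comp (wfcomp d c) i) = Defs.comp (wfcomp d (mixed c g)) i.
Proof.
move=> c0; apply: functional_extensionality => u.
have gc0 := nproper_mixed g c0.
rewrite /Defs.comp (@wfcomp_box d (mixed c g) i (size u)) //.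
rewrite (@smixed_eq_upto _ _ g (size u) _ (fun t =>
  \sum_(z : box (size u)) d (mono z) i * shpow c (mono z) t)) //; last first.
  by move=> t le_t; rewrite (@wfcomp_box d c i (size u)).
rewrite smixed_sum; apply: eq_bigr => z _.
by rewrite (smixedZ g (d (mono z) i) (shpow c (mono z))) smixed_shpow.
Qed.

End Coefficients.
End WienerFliess.

Lemma inord_out N n : (N < n)%N -> (inord n : 'I_N.+1) = ord0.
Proof. by move=> lt_N_n; rewrite /inord /insubd insubN //= ltnS -ltnNge. Qed.

Section WienerFliessCauchy.
Variables (R : realType) (m q l : nat).
Local Notation "a ⧢ b" := (@shuffle R m a b) (at level 40, left associativity).
Local Notation mon := (cmono q).
Local Notation cvec := (nser R m q).
Local Notation cs := (cser R q l).
Local Notation box N := {ffun 'I_q -> 'I_N.+1}.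

Lemma sum_box_shift N (z : box N) (F : mon -> R) :
  (forall (y : mon) j, (N < z j + y j)%N -> F y = 0) ->
  \sum_(e : box N | [forall j, (z j <= e j)%N]) F (msub (mono e) (mono z)) =
  \sum_(y : box N) F (mono y).
Proof.
move=> F_out.
pose shift (y : box N) : box N := [ffun j => inord (z j + y j)].
pose unshift (e : box N) : box N := [ffun j => inord (e j - z j)].
rewrite (reindex_onto shift unshift) => [|e /forallP le_ze]; last first.
  apply/ffunP => j; apply: val_inj.
  have lt_sub : (e j - z j < N.+1)%N by rewrite ltnS (leq_trans (leq_subr _ _)) // -ltnS.
  by rewrite !ffunE /= (inordK lt_sub) subnKC // inordK.
rewrite big_mkcond /=; apply: eq_bigr => y _.
have [/forallP fit | /forallPn[j overflow]] := boolP [forall j, z j + y j <= N]%N.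
  have shiftE j : (shift y j : nat) = (z j + y j)%N by rewrite ffunE inordK // ltnS fit.
  have -> : [forall j, z j <= shift y j]%N by apply/forallP => j; rewrite shiftE leq_addr.
  have -> : unshift (shift y) == y.
    by apply/eqP/ffunP => j; rewrite ffunE shiftE addKn inord_val.
  by congr F; apply/ffunP => j; rewrite !ffunE inordK ?addKn // ltnS fit.
rewrite -ltnNge in overflow; rewrite (F_out (mono y) j) ?ffunE //.
case: ifP => // /andP[_ /eqP yE]; have := congr1 (fun f : box N => f j : nat) yE.
rewrite /= !ffunE (inord_out overflow) sub0n inordK // => y0.
by move: overflow; rewrite -y0 addn0 ltnNge -ltnS ltn_ord.
Qed.

Lemma cprod_box N (a b : cs) (eta : box N) i :
  cprod a b (mono eta) i = \sum_(z : box N | [forall j, z j <= eta j]%N)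
                             a (mono z) i * b (msub (mono eta) (mono z)) i.
Proof.
pose P e := [forall j, e j <= mono eta j]%N; pose F e := a e i * b (msub (mono eta) e) i.
have mono_le K (z : box K) : P (mono z) = [forall j, z j <= eta j]%N.
  by apply: eq_forallb => j; rewrite !ffunE.
transitivity (\sum_(z : box (deg (mono eta)) | P (mono z)) F (mono z)).
  apply: eq_big => [z | z _]; first by apply: eq_forallb => j; rewrite !ffunE.
  by congr (_ * b _ i); apply/ffunP => j; rewrite !ffunE.
rewrite (sum_box_eq (K2 := N) (P := P) F) => [|e /forallP le_e j].
  by apply: eq_bigl => z; rewrite mono_le.
rewrite leq_min (leq_trans (le_e j)) ?coef_le_deg //=.
by apply: leq_trans (le_e j) _; rewrite ffunE -ltnS ltn_ord.
Qed.

Lemma wfcomp_cprod (a b : cs) (c : cvec) i : nproper c ->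
  Defs.comp (wfcomp (cprod a b) c) i = Defs.comp (wfcomp a c) i ⧢ Defs.comp (wfcomp b c) i.
Proof.
move=> c0; apply: functional_extensionality => u; rewrite /Defs.comp.
pose wf_box (d : cs) t := \sum_(z : box (size u)) d (mono z) i * shpow c (mono z) t.
rewrite (shuffle_eq_upto (n := size u) (a' := wf_box a) (b' := wf_box b)) //;
  try by move=> t le_t; apply: wfcomp_box.
rewrite (wfcomp_box _ _ _ (leqnn _)) // shuffle_suml.
under eq_bigr do rewrite cprod_box mulr_suml.
rewrite (exchange_big_dep predT) //=; apply: eq_bigr => z _.
rewrite (shuffleZl (a (mono z) i) (shpow c (mono z))) /sscale.
under eq_bigr do rewrite -mulrA.
rewrite -mulr_sumr; congr (_ * _); rewrite shuffle_sumr.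
transitivity (\sum_(y : box (size u)) b (mono y) i * shpow c (madd (mono z) (mono y)) u).
  rewrite -(sum_box_shift (z := z) (F := fun y => b y i * shpow c (madd (mono z) y) u))
    => [|y j overflow].
    apply: eq_bigr => e /forallP le_ze.
    by congr (_ * shpow c _ u); apply/ffunP => j; rewrite !ffunE subnKC.
  rewrite shpow_vanishes_below ?mulr0 //; apply: leq_trans overflow _.
  by have := coef_le_deg (madd (mono z) y) j; rewrite !ffunE.
apply: eq_bigr => y _.
by rewrite shpow_madd (shuffleZr (b (mono y) i) (shpow c (mono z)) (shpow c (mono y))).
Qed.

End WienerFliessCauchy.

Section Feedback.
Variables (R : realType) (m q : nat).
Local Notation "a ⧢ b" := (@shuffle R m a b) (at level 40, left associativity).
Local Notation sone := (@sone R m).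
Local Notation cs := (cser R q m).
Local Notation cone := (@cone R q m).
Local Notation nsone := (@nsone R m).

Lemma cprod_at0 (d f : cs) i : cprod d f (cmono0 q) i = d (cmono0 q) i * f (cmono0 q) i.
Proof.
apply: cprod_single => z /forallP z_le /negP[]; apply/eqP/ffunP => j.
by apply: val_inj; apply/eqP; rewrite ffunE /= -leqn0; have := z_le j; rewrite ffunE.
Qed.

Lemma cpimproper_cone : cpimproper cone.
Proof. by move=> i; rewrite /cone eqxx oner_eq0. Qed.

Lemma cpimproper_cprod (d1 d2 : cs) :
  cpimproper d1 -> cpimproper d2 -> cpimproper (cprod d1 d2).
Proof. by move=> d1_0 d2_0 i; rewrite cprod_at0 mulf_neq0. Qed.

Lemma cpimproper_cinv (d : cs) : cpimproper d -> cpimproper (cinv d).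
Proof.
move=> d0 i; apply/eqP => cinv0; have := congr1 (fun F => F (cmono0 q) i) (cinvP d0).
by rewrite /= cprod_at0 cinv0 mulr0 /cone eqxx => /esym/eqP; rewrite oner_eq0.
Qed.

Lemma cprod1l (f : cs) : cprod cone f = f.
Proof.
apply: functional_extensionality => e; apply: functional_extensionality => i.
rewrite cprod_single /cone ?eqxx ?mul1r // => z _ z_neq0.
by rewrite mono_eq0 (negbTE z_neq0) mul0r.
Qed.

Lemma cinv_cone : cinv cone = cone.
Proof. by rewrite -[LHS]cprod1l (cinvP cpimproper_cone). Qed.

Lemma mixed_nsone l (c : nser R m l) : mixed c nsone = c.
Proof.
apply: functional_extensionality => w; apply: functional_extensionality => i.
by rewrite -[LHS]/(smixed _ (Defs.comp c i) w) smixed_nsone.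
Qed.

Lemma compinv_nsone : compinv nsone = nsone.
Proof. by apply: compinv_unique => j; rewrite ?smixed_nsone ?shuffle1l ?oner_eq0. Qed.

Lemma feedback_cone (c : nser R m q) : nproper c -> feedback c cone = c.
Proof. by move=> c0; rewrite /feedback cinv_cone wfcomp_cone // compinv_nsone mixed_nsone. Qed.

Lemma npimproper_wfcomp_cinv (b : nser R m q) (d : cs) :
  nproper b -> cpimproper d -> npimproper (wfcomp (cinv d) b).
Proof. by move=> b0 d0 j; rewrite wfcomp_nil // cpimproper_cinv. Qed.

Section Product.
Variables (c : nser R m q) (d1 d2 : cs).
Hypotheses (c0 : nproper c) (d1_0 : cpimproper d1) (d2_0 : cpimproper d2).

Lemma wfcomp_cinvP (d : cs) j : cpimproper d ->
  Defs.comp (wfcomp d c) j ⧢ Defs.comp (wfcomp (cinv d) c) j = sone.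
Proof. by move=> d0; rewrite -wfcomp_cprod // cinvP // wfcomp_cone. Qed.

Lemma wfcomp_cinv_cprod j : Defs.comp (wfcomp (cinv (cprod d1 d2)) c) j =
  Defs.comp (wfcomp (cinv d1) c) j ⧢ Defs.comp (wfcomp (cinv d2) c) j.
Proof.
have d12_0 := cpimproper_cprod d1_0 d2_0.
apply: (shuffle_inv_unique (a := Defs.comp (wfcomp (cprod d1 d2) c) j)).
  exact: wfcomp_cinvP.
by rewrite wfcomp_cprod // shuffleACA !wfcomp_cinvP // shuffle1l.
Qed.

Let h1 := compinv (wfcomp (cinv d1) c).
Let h2 := compinv (wfcomp (cinv d2) (mixed c h1)).

Lemma compinv_wfcomp_cinv_cprod : compinv (wfcomp (cinv (cprod d1 d2)) c) = mixed_star h1 h2.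
Proof.
have c1_0 : nproper (mixed c h1) by apply: nproper_mixed.
apply: compinv_unique => [|j].
  exact: npimproper_wfcomp_cinv (cpimproper_cprod d1_0 d2_0).
rewrite -smixed_comp wfcomp_cinv_cprod smixed_shuffle (smixed_wfcomp h1 (cinv d2)) //.
rewrite [Defs.comp (mixed_star _ _) j]/= smixed_shuffle shuffleACA -smixed_shuffle.
by rewrite compinvP ?smixed_sone ?shuffle1l ?compinvP //; apply: npimproper_wfcomp_cinv.
Qed.

Lemma feedback_cprod : feedback (feedback c d1) d2 = feedback c (cprod d1 d2).
Proof.
rewrite [RHS]/feedback compinv_wfcomp_cinv_cprod.
apply: functional_extensionality => w; apply: functional_extensionality => i.
by rewrite -[LHS]/(smixed h2 (smixed h1 (Defs.comp c i)) w) smixed_comp.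
Qed.

End Product.
End Feedback.

Unset Implicit Arguments.

Theorem theorem19 (R : realType) (m q : nat) (c : nser R m q) (d1 d2 : cser R q m) :
  nproper c -> cpimproper d1 -> cpimproper d2 ->
  feedback c (@cone R q m) = c /\
  feedback (feedback c d1) d2 = feedback c (cprod d1 d2).
Proof.
move=> c0 d1_0 d2_0; split; first exact: feedback_cone.
exact: feedback_cprod.
Qed.
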